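(* Consider the DOMT construction described in the context. Let $t_0$ be the time of the last rejection, and suppose a ''mini-drought'' of length $k$ occurs, i.e. no hypotheses are rejected for $t\in(t_0,t_0+k]$. Assume the base procedure's threshold during the drought is governed by a monotonically decreasing sequence $\gamma_k=\Theta\!\big(\tfrac{1}{k\log^2k}\big)$ indexed by the time elapsed since the last discovery, so that at $t=t_0+k$, $\lambda_t^{\mathrm{base}}=\Theta(\gamma_k)$. Then, at $t=t_0+k$, $$\frac{\mathbb{E}[\lambda_t^{\mathrm{DOMT}}]}{\lambda_t^{\mathrm{base}}}=1+\Omega\!\left(\frac{k\log^2k}{\sqrt{t_0+k}}\right),$$ and if the drought is macroscopic, $k=\Theta(t)$, this relative advantage diverges at rate $\Omega(\sqrt t\,\log^2t)$.
   Context: A base online testing procedure produces thresholds $\lambda_t^{\mathrm{base}}\in[0,1]$ from its own (virtual) history. DOMT with exploration coefficient $\kappa>0$ and level $\alpha\in(0,1)$: let $Z_t$ be i.i.d. $\mathrm{Uniform}[0,1]$ independent of everything else, $\xi_t=\frac{\kappa\alpha}{\sqrt t}Z_t$ (so $\xi_t\sim\mathrm{Uniform}[0,\kappa\alpha/\sqrt t]$), and the DOMT threshold is $\lambda_t^{\mathrm{DOMT}}=\lambda_t^{\mathrm{base}}+\xi_t$ (clipped at $1$), where the base procedure's state is updated only using its own unperturbed decisions $\mathbf{1}\{p_t\le\lambda_t^{\mathrm{base}}\}$. *)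

From mathcomp Require Import all_boot all_order all_algebra.
From mathcomp Require Import all_classical all_reals all_analysis.
Set Implicit Arguments. Unset Strict Implicit. Unset Printing Implicit Defensive.
Import Order.TTheory GRing.Theory Num.Theory.
Local Open Scope ring_scope.

Definition UnifZ (R : realType) := uniform_prob (@ltr01 R).

Definition xi (R : realType) (kappa alpha : R) (t : nat) (z : R) : R :=
  kappa * alpha / Num.sqrt (t%:R) * z.

Definition lambda_DOMT (R : realType) (kappa alpha : R) (t : nat)
    (lam_base : R) (z : R) : R :=
  Num.min (lam_base + xi kappa alpha t z) 1.

(* E[lambda_t^DOMT] (expectation over Z, the base threshold being given). *)
Definition E_lambda_DOMT (R : realType) (kappa alpha : R) (t : nat)
    (lam_base : R) : R :=
  fine ('E_(@UnifZ R)[lambda_DOMT kappa alpha t lam_base])%E.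

From mathcomp Require Import all_boot all_order all_algebra.
From mathcomp Require Import all_classical all_reals all_analysis.
From mathcomp Require Import measurable_realfun ring lra.
Set Implicit Arguments.
Unset Strict Implicit.
Unset Printing Implicit Defensive.
Import Order.TTheory GRing.Theory Num.Theory.
Local Open Scope ring_scope.
Local Open Scope classical_set_scope.

(* Z is uniform on [0,1], so with probability 1/2 the perturbation xi_t is at
   least kappa*alpha/(2 sqrt t); while lambda^base <= 1/2 the clipping at 1
   costs only a constant factor, hence
   E[lambda^DOMT] >= lambda^base + min(kappa*alpha, 1/2) / (4 sqrt t).
   Dividing by lambda^base = O(1/(k log^2 k)) gives the relative gain
   Omega(k log^2 k / sqrt t).  In a macroscopic drought k >= theta t, and
   log k >= (log t)/2 as soon as t >= theta^-2, so
   k log^2 k / sqrt t >= (theta/4) sqrt t log^2 t. *)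

Section probability_bounds.
Context d (T : measurableType d) (R : realType) (P : probability T R).

Lemma integral_ge_cst_indic (A : set T) (p a e : R) (g : T -> R) :
  measurable A -> P A = p%:E -> measurable_fun setT g -> 0 <= a -> 0 <= e ->
  (forall x, a + e * \1_A x <= g x) -> ((a + e * p)%:E <= \int[P]_x (g x)%:E)%E.
Proof.
move=> mA PA mg a0 e0 ag; rewrite EFinD EFinM -PA.
have mi : measurable_fun setT (fun x => e%:E * (\1_A x)%:E)%E.
  by apply/measurable_funeM/measurable_EFinP; exact: measurable_indic.
have -> : (a%:E + e%:E * P A = \int[P]_x (a%:E + e%:E * (\1_A x)%:E))%E.
  rewrite ge0_integralD //; last by move=> x _; rewrite mule_ge0 // lee_fin.
  rewrite integral_cst //= probability_setT mule1 ge0_integralZl //.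
  - by rewrite (integral_indic _ measurableT mA) setIT.
  - by apply/measurable_EFinP; exact: measurable_indic.
apply: ge0_le_integral => //.
- by move=> x _; rewrite -EFinM -EFinD lee_fin addr_ge0 ?mulr_ge0.
- exact: emeasurable_funD.
- exact/measurable_EFinP.
- by move=> x _; rewrite -EFinM -EFinD lee_fin.
Qed.

Lemma integral_le_cst (g : T -> R) (b : R) :
  measurable_fun setT g -> (forall x, 0 <= g x <= b) ->
  (\int[P]_x (g x)%:E <= b%:E)%E.
Proof.
move=> mg gb.
have <- : (\int[P]_x (cst b%:E) x = b%:E)%E.
  by rewrite integral_cst //= probability_setT mule1.
apply: ge0_le_integral => //.
- by move=> x _; rewrite lee_fin; case/andP: (gb x).
- exact/measurable_EFinP.
- by move=> x _; rewrite lee_fin; case/andP: (gb x).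
Qed.

End probability_bounds.

Section uniform_unit_interval.
Context (R : realType).
Local Notation P := (@UnifZ R).

Lemma UnifZ_setC_itv01 : P (~` `[0, 1]) = 0%E.
Proof.
by rewrite /UnifZ /= /uniform_prob integral_uniform_pdf setICl integral_set0.
Qed.

Lemma eq_integral_UnifZ (f g : R -> \bar R) :
  measurable_fun setT f -> measurable_fun setT g ->
  (forall z, 0 <= z <= 1 -> f z = g z) -> (\int[P]_z f z = \int[P]_z g z)%E.
Proof.
move=> mf mg fg; apply: ae_eq_integral => //.
exists (~` `[0, 1]); split; [exact: measurableC | exact: UnifZ_setC_itv01 |].
by move=> z /= + z01; apply=> _; apply: fg; rewrite in_itv in z01.
Qed.

Lemma UnifZ_itv_half1 : P `[2^-1, 1] = (2^-1)%:E.
Proof.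
rewrite /UnifZ /= /uniform_prob (eq_integral (fun=> 1%:E)); last first.
  move=> x; rewrite inE /= in_itv /= /uniform_pdf => /andP[hx1 hx2].
  by rewrite hx2 andbT (le_trans _ hx1) ?invr_ge0 ?ler0n // subr0 invr1.
rewrite integral_cst //= mul1e lebesgue_measure_itv /= lte_fin.
by rewrite invf_lt1 ?ltr1n // -EFinD; congr (_%:E); lra.
Qed.

Lemma expectation_min_UnifZ_ge (lam c : R) : 0 < c -> 0 <= lam <= 2^-1 ->
  lam + Num.min c 2^-1 / 4 <= fine ('E_P[fun z => Num.min (lam + c * z) 1]).
Proof.
move=> c0 /andP[lam0 lam2].
(* Z lies in [0,1] almost surely; clamping it there leaves the expectation
   unchanged and makes the integrand at least lam everywhere. *)
pose clamp z : R := Num.min (Num.max z 0) 1.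
pose h z := Num.min (lam + c * clamp z) 1.
have mh : measurable_fun setT h.
  apply: measurable_minr => //; apply: measurable_funD => //.
  apply: measurable_funM => //.
  by apply: measurable_minr => //; exact: measurable_maxr.
have -> : ('E_P[(fun z => Num.min (lam + c * z) 1)%R] = \int[P]_z (h z)%:E)%E.
  rewrite expectation.unlock; apply: eq_integral_UnifZ.
  - apply/measurable_EFinP; apply: measurable_minr => //.
    by apply: measurable_funD => //; exact: measurable_funM.
  - exact/measurable_EFinP.
  - by move=> z /andP[z0 z1]; rewrite /h /clamp (max_l z0) (min_l z1).
have clamp01 z : 0 <= clamp z <= 1.
  by rewrite /clamp ge_min lexx orbT le_min ler01 le_max lexx orbT.
have h_ge z : lam <= h z.
  rewrite /h le_min lerDl (le_trans lam2) ?invf_le1 ?ler1n // andbT.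
  by case/andP: (clamp01 z) => cz0 _; rewrite mulr_ge0 // ltW.
have h01 z : 0 <= h z <= 1.
  by rewrite (le_trans lam0 (h_ge z)) /h ge_min lexx orbT.
set b := Num.min c 2^-1.
have hb z : lam + b / 2 * \1_`[2^-1, 1] z <= h z.
  rewrite indicE; case: (boolP (z \in _)) => [|_]; last by rewrite mulr0 addr0.
  rewrite inE /= in_itv /= => /andP[z2 z1].
  have cz : 2^-1 <= clamp z.
    rewrite /clamp max_l ?min_l //.
    by apply: le_trans z2; rewrite invr_ge0 ler0n.
  have bc : b <= c by rewrite ge_min lexx.
  have b2 : b <= 2^-1 by rewrite ge_min lexx orbT.
  rewrite mulr1 /h le_min; apply/andP; split; last lra.
  by rewrite lerD2l; nra.
have b0 : 0 <= b / 2 by rewrite divr_ge0 // le_min ltW //= invr_ge0 ler0n.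
have lo := integral_ge_cst_indic (P := P) (measurable_itv _) UnifZ_itv_half1
  mh lam0 b0 hb.
have up := integral_le_cst P mh h01.
by move: lo up; case: (\int[P]_z _)%E => [r| |] //=; rewrite lee_fin; lra.
Qed.

End uniform_unit_interval.

Section domt_expectation.
Context (R : realType) (kappa alpha : R).
Hypotheses (kappa_gt0 : 0 < kappa) (alpha_gt0 : 0 < alpha).

Lemma E_lambda_DOMT_ge (t : nat) (lam : R) : (0 < t)%N -> 0 <= lam <= 2^-1 ->
  lam + Num.min (kappa * alpha) 2^-1 / (4 * Num.sqrt t%:R)
    <= E_lambda_DOMT kappa alpha t lam.
Proof.
move=> t_gt0 lam01.
have s1 : 1 <= Num.sqrt (t%:R : R).
  by rewrite -[X in X <= _](@sqrtr1 R) ler_sqrt ?ler1n ?ler0n.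
have s0 : 0 < Num.sqrt (t%:R : R) by apply: lt_le_trans s1.
have ka0 : 0 < kappa * alpha by rewrite mulr_gt0.
have c0 : 0 < kappa * alpha / Num.sqrt t%:R by rewrite divr_gt0.
apply: le_trans (expectation_min_UnifZ_ge c0 lam01).
rewrite lerD2l invfM mulrA mulrAC ler_pM2r ?invr_gt0 ?ltr0n //.
rewrite le_min ler_pM2r ?invr_gt0 // ge_min lexx /= ler_pdivrMr //.
by rewrite ge_min ler_peMr ?orbT // invr_ge0 ler0n.
Qed.

Lemma E_lambda_DOMT_ratio_ge (t : nat) (lam D G : R) :
  (0 < t)%N -> 0 < lam -> 0 < D -> 2 * D <= G -> G * lam <= D ->
  1 + Num.min (kappa * alpha) 2^-1 / (4 * D) * (G / Num.sqrt t%:R)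
    <= E_lambda_DOMT kappa alpha t lam / lam.
Proof.
move=> t_gt0 lam0 D0 GD GlamD.
have lam_half : lam <= 2^-1 by nra.
rewrite ler_pdivlMr //; apply: le_trans (E_lambda_DOMT_ge t_gt0 _); last first.
  by rewrite (ltW lam0) lam_half.
set m := Num.min _ _; set s := Num.sqrt _.
have s0 : 0 < s by rewrite sqrtr_gt0 ltr0n.
have m0 : 0 <= m by rewrite le_min !ltW ?mulr_gt0 //= invr_gt0 ltr0n.
have -> : (1 + m / (4 * D) * (G / s)) * lam = lam + m / (4 * s) * (G * lam / D).
  by field; rewrite !gt_eqF.
have GlamD1 : G * lam / D <= 1 by rewrite ler_pdivrMr // mul1r.
by rewrite lerD2l ler_piMr // divr_ge0 // mulr_ge0 // ltW.
Qed.

End domt_expectation.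

Lemma mul_ln_sqr_gt0 (R : realType) (k : nat) :
  (2 <= k)%N -> 0 < k%:R * ln (k%:R : R) ^+ 2.
Proof.
move=> k2; rewrite mulr_gt0 ?ltr0n ?(leq_trans _ k2) // exprn_gt0 // ln_gt0 //.
by rewrite ltr1n.
Qed.

Lemma nbhs_infty_mul_ln_sqr_ge (R : realType) (B : R) :
  \forall k \near \oo, (2 <= k)%N /\ B <= k%:R * ln k%:R ^+ 2.
Proof.
have ln2 : 0 < ln (2 : R) by rewrite ln_gt0 // ltr1n.
near=> k; have k2 : (2 <= k)%N by near: k; exact: nbhs_infty_ge.
split=> //; have kB : B / ln 2 ^+ 2 <= k%:R by near: k; exact: nbhs_infty_ger.
have lnk : ln (2 : R) <= ln k%:R.
  by rewrite ler_ln ?posrE ?ler_nat // ltr0n (leq_trans _ k2).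
apply: le_trans (_ : k%:R * ln 2 ^+ 2 <= _).
  by rewrite -ler_pdivrMr ?exprn_gt0.
by apply: ler_wpM2l => //; rewrite ler_sqr ?nnegrE // ltW // (lt_le_trans ln2).
Unshelve. all: by end_near.
Qed.

Lemma sqrt_mul_ln_sqr_le (R : realType) (theta t x : R) :
  0 < theta -> 1 <= t -> theta^-2 <= t -> theta * t <= x ->
  theta / 4 * (Num.sqrt t * ln t ^+ 2) <= x * ln x ^+ 2 / Num.sqrt t.
Proof.
move=> theta0 t1 tth thx.
have t0 : 0 < t by apply: lt_le_trans t1.
have x0 : 0 < x by apply: lt_le_trans thx; rewrite mulr_gt0.
have lnt0 : 0 <= ln t by rewrite ln_ge0.
have lnx : ln t / 2 <= ln x.
  have : ln (theta * t) <= ln x by rewrite ler_ln ?posrE ?mulr_gt0.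
  have : ln (theta^-2) <= ln t by rewrite ler_ln ?posrE ?invr_gt0 ?exprn_gt0.
  rewrite lnM ?posrE // lnV ?posrE ?exprn_gt0 // lnXn //; lra.
have lnx2 : ln t ^+ 2 / 4 <= ln x ^+ 2 by nra.
have s0 : 0 < Num.sqrt t by rewrite sqrtr_gt0.
rewrite ler_pdivlMr //; set s := Num.sqrt t; set L := ln t ^+ 2.
have ss : s * s = t by rewrite -expr2 sqr_sqrtr // ltW.
have -> : theta / 4 * (s * L) * s = (theta * t) * (L / 4) by rewrite -ss; field.
by apply: ler_pM; rewrite // ?mulr_ge0 ?divr_ge0 ?sqr_ge0 // ltW.
Qed.

Lemma mini_drought_advantage (R : realType) (kappa alpha D : R)
    (lam_base : nat -> nat -> R) :
  0 < kappa -> 0 < alpha -> 0 < D ->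
  (forall t0 k : nat, (2 <= k)%N -> 0 < lam_base t0 k) ->
  (forall t0 k : nat, (2 <= k)%N ->
     k%:R * ln k%:R ^+ 2 * lam_base t0 k <= D) ->
  exists2 C : R, 0 < C & exists K : nat, forall t0 k : nat, (K <= k)%N ->
    1 + C * (k%:R * ln k%:R ^+ 2 / Num.sqrt (t0 + k)%:R)
      <= E_lambda_DOMT kappa alpha (t0 + k) (lam_base t0 k) / lam_base t0 k.
Proof.
move=> kappa0 alpha0 D0 lam_gt0 lam_le.
exists (Num.min (kappa * alpha) 2^-1 / (4 * D)).
  by rewrite divr_gt0 ?mulr_gt0 // lt_min mulr_gt0 //= invr_gt0 ltr0n.
have [K _ hK] := nbhs_infty_mul_ln_sqr_ge (2 * D).
exists K => t0 k /hK [k2 GD].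
apply: E_lambda_DOMT_ratio_ge => //; last exact: lam_le.
- by rewrite addn_gt0 (leq_trans _ k2) ?orbT.
- exact: lam_gt0.
Qed.

Lemma macroscopic_drought_advantage (R : realType) (f : nat -> nat -> R)
    (C : R) (K : nat) : 0 < C ->
  (forall t0 k : nat, (K <= k)%N ->
     1 + C * (k%:R * ln k%:R ^+ 2 / Num.sqrt (t0 + k)%:R) <= f t0 k) ->
  forall theta : R, 0 < theta ->
  exists C' : R, 0 < C' /\ exists T : nat, forall t0 k : nat,
    (T <= t0 + k)%N -> theta * (t0 + k)%:R <= k%:R ->
    1 + C' * (Num.sqrt (t0 + k)%:R * ln (t0 + k)%:R ^+ 2) <= f t0 k.
Proof.
move=> C0 hf theta theta0; exists (C * (theta / 4)); split.
  by rewrite mulr_gt0 ?divr_gt0.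
have [T _ hT] : \forall t \near \oo,
    [/\ (1 <= t)%N, theta^-2 <= t%:R & K%:R / theta <= t%:R].
  near=> t; split; near: t;
    [exact: nbhs_infty_ge | exact: nbhs_infty_ger | exact: nbhs_infty_ger].
exists T => t0 k /hT [t1 tth tK] hk.
have Kk : (K <= k)%N.
  by rewrite -(ler_nat R); apply: le_trans hk; rewrite mulrC -ler_pdivrMr.
apply: le_trans (hf t0 k Kk); rewrite lerD2l -mulrA ler_pM2l //.
by apply: sqrt_mul_ln_sqr_le; rewrite ?ler1n.
Unshelve. all: by end_near.
Qed.

Theorem lemma1 (R : realType) (kappa alpha : R)
  (gamma : nat -> R) (lam_base : nat -> nat -> R)
  (c1 c2 d1 d2 : R) :
  0 < kappa -> 0 < alpha < 1 ->
  (* gamma is monotonically decreasing *)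
  (forall m n : nat, (m <= n)%N -> gamma n <= gamma m) ->
  (* gamma_k = Theta(1/(k log^2 k)) *)
  0 < c1 -> 0 < c2 ->
  (forall k : nat, (2 <= k)%N ->
     c1 / (k%:R * ln (k%:R) ^+ 2) <= gamma k <= c2 / (k%:R * ln (k%:R) ^+ 2)) ->
  (* base thresholds lie in [0,1] *)
  (forall t0 k : nat, 0 <= lam_base t0 k <= 1) ->
  (* lambda_t^base = Theta(gamma_k) at t = t0 + k *)
  0 < d1 -> 0 < d2 ->
  (forall t0 k : nat, (2 <= k)%N ->
     d1 * gamma k <= lam_base t0 k <= d2 * gamma k) ->
  (* ratio = 1 + Omega(k log^2 k / sqrt(t0 + k)) *)
  (exists C : R, 0 < C /\ exists K : nat, forall t0 k : nat, (K <= k)%N ->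
     1 + C * (k%:R * ln (k%:R) ^+ 2 / Num.sqrt ((t0 + k)%:R))
       <= E_lambda_DOMT kappa alpha (t0 + k) (lam_base t0 k) / lam_base t0 k)
  /\
  (* macroscopic drought k = Theta(t): relative advantage Omega(sqrt t log^2 t) *)
  (forall theta : R, 0 < theta ->
     exists C : R, 0 < C /\ exists T : nat, forall t0 k : nat,
       (T <= t0 + k)%N -> theta * (t0 + k)%:R <= k%:R ->
       1 + C * (Num.sqrt ((t0 + k)%:R) * ln ((t0 + k)%:R) ^+ 2)
         <= E_lambda_DOMT kappa alpha (t0 + k) (lam_base t0 k) / lam_base t0 k).
Proof.
move=> kappa0 /andP[alpha0 _] _ c1_gt0 c2_gt0 gamma_bnd _ d1_gt0 d2_gt0 lam_bnd.
have lam_gt0 t0 k : (2 <= k)%N -> 0 < lam_base t0 k.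
  move=> k2; have /andP[gamma_ge _] := gamma_bnd k k2.
  have /andP[lam_ge _] := lam_bnd t0 k k2.
  apply: lt_le_trans lam_ge; rewrite mulr_gt0 // (lt_le_trans _ gamma_ge) //.
  by rewrite divr_gt0 ?mul_ln_sqr_gt0.
have lam_le t0 k : (2 <= k)%N ->
    k%:R * ln k%:R ^+ 2 * lam_base t0 k <= d2 * c2.
  move=> k2; have /andP[_ gamma_le] := gamma_bnd k k2.
  have /andP[_ lam_le] := lam_bnd t0 k k2.
  rewrite mulrC -ler_pdivlMr ?mul_ln_sqr_gt0 // -mulrA.
  exact: le_trans lam_le (ler_wpM2l (ltW d2_gt0) gamma_le).
have [C C0 [K hK]] :=
  mini_drought_advantage kappa0 alpha0 (mulr_gt0 d2_gt0 c2_gt0) lam_gt0 lam_le.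
split; first by exists C; split=> //; exists K.
exact: macroscopic_drought_advantage C0 hK.
Qed.
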